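(* Let $d\ge2$ and let $G$ be a connected graph with $E$ edges in which every vertex has degree at most $d^2$. Let $x,y$ be vertices at graph distance $D(x,y)$, and run the Markov chain $M_0$ (defined in the context) starting from ''N'' on $x$ and ''I'' elsewhere. Then: 1. The expected number of steps until vertex $y$ is first labeled ''N'' is $O(E\cdot D(x,y))$. 2. There are constants $C,c>0$ such that, with probability at least $1-e^{-c\,D(x,y)}$, vertex $y$ is labeled ''N'' at some step within the first $C\,E\,D(x,y)$ steps.
   Context: **The Markov chain $M_0$** on a graph $G$ with local dimension $d$ is defined as follows. - The states are labelings of the vertices of $G$ by ''N'' or ''I''. - At each step a uniformly random edge of $G$ is chosen and the labels on its two endpoints are updated: - ''II'' stays ''II''; - any other pair of labels becomes ''IN'' with probability $1/(d^2+1)$, ''NI'' with probability $1/(d^2+1)$, and ''NN'' with probability $(d^2-1)/(d^2+1)$. $D(x,y)$ denotes the graph distance between $x$ and $y$. *)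

From HB Require Import structures.
From mathcomp Require Import all_boot.
From Stdlib Require Import Reals.

Set Implicit Arguments.
Unset Strict Implicit.
Unset Printing Implicit Defensive.

(* Labels: a state is a labeling {ffun V -> bool}; true = "N", false = "I". *)

Definition Rsum (T : finType) (f : T -> R) : R :=
  foldr (fun x acc => Rplus (f x) acc) 0%R (enum T).

Definition Rsum_lt (T : nat) (f : nat -> R) : R :=
  foldr (fun t acc => Rplus (f t) acc) 0%R (iota 0 T).

(* A simple graph is a symmetric irreflexive relation adj on a finType V.
   narcs = number of ordered adjacent pairs (= 2E), nedges = E. *)
Definition narcs (V : finType) (adj : rel V) : nat :=
  #|[pred p : V * V | adj p.1 p.2]|.

Definition nedges (V : finType) (adj : rel V) : nat := (narcs adj)./2.

Definition is_dist (V : finType) (adj : rel V) (x y : V) (n : nat) : Prop :=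
  (exists p : seq V, path adj x p /\ last x p = y /\ size p = n) /\
  (forall p : seq V, path adj x p -> last x p = y -> (n <= size p)%N).

Definition pair_update (d : nat) (a b a' b' : bool) : R :=
  if ~~ a && ~~ b then (if ~~ a' && ~~ b' then 1%R else 0%R)
  else
    let q := (INR (d * d) + 1)%R in
    match a', b' with
    | false, true => (1 / q)%R
    | true, false => (1 / q)%R
    | true, true => ((INR (d * d) - 1) / q)%R
    | false, false => 0%R
    end.

Definition edge_kernel (V : finType) (d : nat) (u v : V)
  (s s' : {ffun V -> bool}) : R :=
  if [forall w, ((w != u) && (w != v)) ==> (s' w == s w)]
  then pair_update d (s u) (s v) (s' u) (s' v) else 0%R.

(* One step of M_0: uniform random edge. We average over the 2E ordered
   pairs; since edge_kernel is symmetric in (u,v) this is the same as the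
   uniform choice among the E unordered edges. *)
Definition M0_kernel (V : finType) (d : nat) (adj : rel V)
  (s s' : {ffun V -> bool}) : R :=
  Rsum (fun p : V * V =>
          if adj p.1 p.2 then (edge_kernel d p.1 p.2 s s' / INR (narcs adj))%R
          else 0%R).

(* avoid d adj y t s = probability that, starting from state s, vertex y is
   labeled "I" at all times 0,1,...,t (i.e. hitting time of "N" at y is > t).
   Defined by the first-step (Markov) decomposition of path probabilities. *)
Fixpoint avoid (V : finType) (d : nat) (adj : rel V) (y : V) (t : nat)
  (s : {ffun V -> bool}) : R :=
  if s y then 0%R
  else match t with
       | 0 => 1%R
       | t'.+1 => Rsum (fun s' => (M0_kernel d adj s s' * avoid d adj y t' s')%R)
       end.

Definition init_state (V : finType) (x : V) : {ffun V -> bool} :=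
  [ffun v => v == x].

(* Hitting time of the label "N" at a target vertex for the chain M0
   (labels: true = "N", false = "I"; D = d^2; N = number of arcs = 2E).

   The front of a labeling is the least distance to the target y of a vertex
   labeled "N".  As "II" is the only absorbing pair, the chain started from a
   labeling with some "N" keeps one forever (it stays live).  Let v0 realise
   the front and let w0 be a neighbour of v0 one step closer to y.  In one
   step the front can grow, by one, only when an arc at v0 other than the two
   orientations of {v0, w0} is chosen and v0 is relabeled "I": there are at
   most 2 (D - 1) such arcs, each acting with probability 1/(D + 1).  The two
   arcs of {v0, w0} bring the front down to dist(w0) with probability
   D/(D + 1).  This drift inequality ([front_drift]) makes
   - the linear potential N (D + 1)/2 * front drop by one per step, which
     bounds the expected hitting time ([avoid_sum_le]), and
   - the exponential potential (1 + 1/D)^front contract by the factor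
     1 - 2/(N (D + 1)^2 D), which gives the exponential tail ([avoid_le]).
   Both potentials start at most at their value for front = D(x, y). *)

From HB Require Import structures.
From mathcomp Require Import all_boot zify.
From Stdlib Require Import Reals Lra.

Set Implicit Arguments.
Unset Strict Implicit.
Unset Printing Implicit Defensive.

(* Real addition and multiplication as MathComp monoid laws, so that the
   finite sums [Rsum] and [Rsum_lt] become big operators. *)
HB.instance Definition _ := Monoid.isComLaw.Build R 0%R Rplus
  (fun a b c => esym (Rplus_assoc a b c)) Rplus_comm Rplus_0_l.
HB.instance Definition _ := Monoid.isMulLaw.Build R 0%R Rmult Rmult_0_l Rmult_0_r.
HB.instance Definition _ :=
  Monoid.isAddLaw.Build R Rmult Rplus Rmult_plus_distr_r Rmult_plus_distr_l.

Lemma RsumE (T : finType) (f : T -> R) : Rsum f = \big[Rplus/0%R]_(x : T) f x.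
Proof. by rewrite /Rsum -big_enum unlock. Qed.

Lemma Rsum_ltE T (f : nat -> R) : Rsum_lt T f = \big[Rplus/0%R]_(0 <= t < T) f t.
Proof. by rewrite /Rsum_lt unlock /index_iota subn0. Qed.

Lemma sumR_le (I : Type) (r : seq I) (P : pred I) (F G : I -> R) :
  (forall i, P i -> (F i <= G i)%R) ->
  (\big[Rplus/0%R]_(i <- r | P i) F i <= \big[Rplus/0%R]_(i <- r | P i) G i)%R.
Proof.
move=> FG; apply: (big_ind2 (fun a b => (a <= b)%R)) => //; first lra.
by move=> *; lra.
Qed.

Lemma sumR_ge0 (I : Type) (r : seq I) (P : pred I) (F : I -> R) :
  (forall i, P i -> (0 <= F i)%R) -> (0 <= \big[Rplus/0%R]_(i <- r | P i) F i)%R.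
Proof.
move=> F0; apply: (big_ind (fun a => (0 <= a)%R)) => //; first lra.
by move=> *; lra.
Qed.

Lemma sumR_const (I : finType) (P : pred I) (c : R) :
  \big[Rplus/0%R]_(i : I) (if P i then c else 0%R) = (INR #|P| * c)%R.
Proof.
rewrite -big_mkcond big_const; elim: #|_| => [|n IH] /=; first lra.
by rewrite -/(INR n.+1) S_INR IH; lra.
Qed.

Lemma sumR_sub (I : finType) (f g : I -> R) :
  \big[Rplus/0%R]_(i : I) (f i - g i)%R =
  (\big[Rplus/0%R]_(i : I) f i - \big[Rplus/0%R]_(i : I) g i)%R.
Proof.
rewrite /Rminus big_split /=; congr (_ + _)%R.
apply: (big_ind2 (fun a b => a = - b)%R) => //; first by rewrite Ropp_0.
by move=> ? ? ? ? -> ->; rewrite Ropp_plus_distr.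
Qed.

Lemma pow_le_exp (a : R) n : (0 <= 1 + a)%R -> ((1 + a) ^ n <= exp (INR n * a))%R.
Proof.
move=> a1; apply: Rle_trans (pow_incr _ _ n (conj a1 (exp_ineq1_le a))) _.
apply: Req_le; elim: n => [|n IH] /=; first by rewrite Rmult_0_l exp_0.
by rewrite IH -exp_plus -/(INR n.+1) S_INR; congr exp; ring.
Qed.

Lemma exp_le x y : (x <= y)%R -> (exp x <= exp y)%R.
Proof. by case/Rle_lt_or_eq_dec => [/exp_increasing/Rlt_le|->]; [|apply: Rle_refl]. Qed.

Section DistanceToTarget.
Variables (V : finType) (adj : rel V) (y : V).

Fixpoint reachable_in (k : nat) (v : V) : bool :=
  if k is k'.+1 then reachable_in k' v || [exists w, adj v w && reachable_in k' w]
  else v == y.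

Lemma reachable_in_path v p :
  path adj v p -> last v p = y -> reachable_in (size p) v.
Proof.
elim: p v => [|w p IH] v /=; first by move=> _ ->.
by case/andP=> avw pw lp; apply/orP; right; apply/existsP; exists w; rewrite avw IH.
Qed.

Hypothesis adj_connected : forall u v, connect adj u v.

Lemma reachable_in_ex v : exists k, reachable_in k v.
Proof.
have /connectP [p pp lp] := adj_connected v y.
by exists (size p); apply: reachable_in_path pp (esym lp).
Qed.

Definition dist_to (v : V) : nat := ex_minn (reachable_in_ex v).

Lemma dist_toP v : reachable_in (dist_to v) v.
Proof. by rewrite /dist_to; case: ex_minnP. Qed.

Lemma dist_to_min v k : reachable_in k v -> dist_to v <= k.
Proof. by rewrite /dist_to; case: ex_minnP => m _; apply. Qed.

Lemma dist_to0 v : dist_to v = 0 -> v = y.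
Proof. by move=> v0; have := dist_toP v; rewrite v0 => /eqP. Qed.

Lemma dist_to_adj u v : adj u v -> dist_to u <= (dist_to v).+1.
Proof.
move=> auv; apply: dist_to_min => /=; apply/orP; right.
by apply/existsP; exists v; rewrite auv dist_toP.
Qed.

Lemma dist_to_step v : 0 < dist_to v ->
  exists2 w, adj v w & (dist_to w).+1 = dist_to v.
Proof.
have := dist_toP v; have := @dist_to_min v.
case E: (dist_to v) => [|k] //= kmin /orP[rv|/existsP[w /andP[avw rw]]] _.
  by have := kmin _ rv; rewrite ltnn.
exists w => //; have := dist_to_min rw; have := dist_to_adj avw; lia.
Qed.

Lemma dist_to_le x n : is_dist adj x y n -> dist_to x <= n.
Proof. by case=> -[p [pp [lp <-]]] _; apply: dist_to_min; apply: reachable_in_path. Qed.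

End DistanceToTarget.

Section Front.
Variables (V : finType) (dl : V -> nat).

(* The front of a labeling [s]: the least value of [dl] over the vertices
   labeled "N" (and 0 if there is none). *)
Definition front (s : {ffun V -> bool}) : nat :=
  if [pick w | s w] is Some w0 then dl [arg min_(i < w0 | s i) dl i] else 0.

Lemma front_le (s : {ffun V -> bool}) w : s w -> front s <= dl w.
Proof.
rewrite /front; case: pickP => [w0 sw0|/(_ w) ->//] sw.
by case: arg_minnP => // i _; apply.
Qed.

Lemma front_attained (s : {ffun V -> bool}) w : s w ->
  exists2 v, s v & front s = dl v.
Proof.
rewrite /front; case: pickP => [w0 sw0|/(_ w) ->//] _.
by case: arg_minnP => // i si _; exists i.
Qed.

End Front.

Section OneStep.
Variables (V : finType) (d : nat).
Hypothesis d_pos : 0 < d.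

Let q := (INR (d * d) + 1)%R.

Lemma INR_dd_ge1 : (1 <= INR (d * d))%R.
Proof. by apply: (le_INR 1); apply/leP; rewrite muln_gt0 d_pos. Qed.

Lemma pair_update_ge0 a b a' b' : (0 <= pair_update d a b a' b')%R.
Proof.
have D1 := INR_dd_ge1; have q0 : (0 < / q)%R by apply: Rinv_0_lt_compat; rewrite /q; lra.
by rewrite /pair_update /Rdiv -/q; case: a b a' b' => [] [] [] [] /=; nra.
Qed.

Lemma pair_update_sum1 a b :
  (pair_update d a b true true + pair_update d a b true false +
   (pair_update d a b false true + pair_update d a b false false))%R = 1%R.
Proof.
have D1 := INR_dd_ge1.
by rewrite /pair_update; case: a; case: b => /=; try lra; field; lra.
Qed.

Lemma pair_update_sym a b a' b' : pair_update d a b a' b' = pair_update d b a b' a'.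
Proof. by rewrite /pair_update andbC; case: a' b' => [] []. Qed.

Lemma pair_update_N b a' b' :
  pair_update d true b a' b' =
  if a' && b' then ((INR (d * d) - 1) / q)%R
  else if a' || b' then (1 / q)%R else 0%R.
Proof. by case: a' b' => [] []. Qed.

Definition relabel (s : {ffun V -> bool}) (u v : V) (a b : bool) : {ffun V -> bool} :=
  [ffun w => if w == u then a else if w == v then b else s w].

Lemma relabelE s u v a b w :
  relabel s u v a b w = if w == u then a else if w == v then b else s w.
Proof. by rewrite ffunE. Qed.

Lemma relabel_sym s u v a b : u != v -> relabel s u v a b = relabel s v u b a.
Proof.
move=> nuv; apply/ffunP => w; rewrite !relabelE.
by case: (eqVneq w u) => [->|_] //; rewrite (negbTE nuv).
Qed.

Definition edge_mean (G : {ffun V -> bool} -> R) (s : {ffun V -> bool}) (u v : V) : R :=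
  \big[Rplus/0%R]_(ab : bool * bool)
     (pair_update d (s u) (s v) ab.1 ab.2 * G (relabel s u v ab.1 ab.2))%R.

Lemma sum_bool2 (F : bool * bool -> R) :
  \big[Rplus/0%R]_(ab : bool * bool) F ab =
  (F (true, true) + F (true, false) + (F (false, true) + F (false, false)))%R.
Proof.
transitivity (\big[Rplus/0%R]_(p : bool * bool) F (p.1, p.2)).
  by apply: eq_bigr => -[].
by rewrite -(pair_bigA _ (fun a b => F (a, b))) !big_bool.
Qed.

Lemma edge_mean_sym G s u v : u != v -> edge_mean G s u v = edge_mean G s v u.
Proof.
move=> nuv; rewrite /edge_mean !sum_bool2 /= !(pair_update_sym (s u)).
by rewrite !(relabel_sym _ _ _ nuv); lra.
Qed.

Lemma edge_kernel_mean (u v : V) s G : u != v ->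
  Rsum (fun s' => edge_kernel d u v s s' * G s')%R = edge_mean G s u v.
Proof.
move=> nuv; rewrite RsumE (partition_big (fun s' : {ffun V -> bool} => (s' u, s' v)) xpredT) //=.
apply: eq_bigr => -[a b] _.
have vu : (v == u) = false by rewrite eq_sym (negbTE nuv).
rewrite (bigD1 (relabel s u v a b)) /=; last by rewrite !relabelE eqxx vu eqxx.
rewrite big1 ?Rplus_0_r.
  rewrite /edge_kernel ifT; first by rewrite !relabelE eqxx vu eqxx.
  apply/forallP => w; apply/implyP => /andP[wu wv].
  by rewrite relabelE (negbTE wu) (negbTE wv).
move=> s' /andP[/eqP [su sv] ns']; rewrite /edge_kernel.
case: ifP => [/forallP agree|_]; last by rewrite Rmult_0_l.
case/eqP: ns'; apply/ffunP => w; rewrite relabelE.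
case: eqP => [->|/eqP wu] //; case: eqP => [->|/eqP wv] //.
by have := agree w; rewrite wu wv => /eqP.
Qed.

Lemma edge_kernel_ge0 (u v : V) s s' : (0 <= edge_kernel d u v s s')%R.
Proof. by rewrite /edge_kernel; case: ifP => _; [apply: pair_update_ge0 | lra]. Qed.

Variable adj : rel V.

Lemma M0_kernel_mean s G : irreflexive adj ->
  Rsum (fun s' => M0_kernel d adj s s' * G s')%R =
  \big[Rplus/0%R]_(p : V * V)
     (if adj p.1 p.2 then edge_mean G s p.1 p.2 / INR (narcs adj) else 0)%R.
Proof.
move=> irr; rewrite RsumE /M0_kernel.
under eq_bigr do rewrite RsumE big_distrl.
rewrite exchange_big; apply: eq_bigr => -[u v] _ /=.
case: ifP => auv; last by rewrite big1 // => s' _; rewrite Rmult_0_l.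
have nuv : u != v by apply: contraTneq auv => ->; rewrite irr.
rewrite -edge_kernel_mean // RsumE /Rdiv big_distrl.
by apply: eq_bigr => s' _ /=; ring.
Qed.

Lemma M0_kernel_ge0 s s' : (0 <= M0_kernel d adj s s')%R.
Proof.
rewrite /M0_kernel RsumE; apply: sumR_ge0 => p _; case: ifP => ap; last lra.
apply: Rmult_le_pos; first exact: edge_kernel_ge0.
apply/Rlt_le/Rinv_0_lt_compat/lt_0_INR/ltP/card_gt0P; exists p; by rewrite inE.
Qed.

Definition live (s : {ffun V -> bool}) : bool := [exists w, s w].

(* [M0] never leaves the live labelings: "II" is the only absorbing pair. *)
Lemma M0_kernel_dead s s' : live s -> ~~ live s' -> M0_kernel d adj s s' = 0%R.
Proof.
move=> /existsP[w sw]; rewrite negb_exists => /forallP s'I.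
have s'0 z : s' z = false by apply/negbTE.
rewrite /M0_kernel RsumE big1 // => -[u v] _ /=.
case: ifP => // _; rewrite /edge_kernel; case: ifP => [/forallP agree|_]; last first.
  by rewrite /Rdiv Rmult_0_l.
have: s u || s v.
  case: (boolP ((w != u) && (w != v))) => [wuv|].
    by have := agree w; rewrite wuv s'0 sw.
  by rewrite negb_and !negbK => /orP[/eqP<-|/eqP<-]; rewrite sw ?orbT.
by rewrite !s'0 /pair_update; case: (s u) (s v) => [] [] //= _; rewrite /Rdiv Rmult_0_l.
Qed.

Lemma M0_mean_le_live s (G1 G2 : {ffun V -> bool} -> R) : live s ->
  (forall s', live s' -> (G1 s' <= G2 s')%R) ->
  (Rsum (fun s' => M0_kernel d adj s s' * G1 s') <=
   Rsum (fun s' => M0_kernel d adj s s' * G2 s'))%R.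
Proof.
move=> ls G12; rewrite !RsumE; apply: sumR_le => s' _.
case: (boolP (live s')) => ls'.
  by apply: Rmult_le_compat_l; [apply: M0_kernel_ge0 | apply: G12].
by rewrite M0_kernel_dead //; lra.
Qed.

End OneStep.

Section ArcCounting.
Variables (V : finType) (adj : rel V).
Hypothesis adj_sym : symmetric adj.

Definition is_edge_arc (v0 w0 : V) (p : V * V) : bool :=
  (p == (v0, w0)) || (p == (w0, v0)).

Definition is_side_arc (v0 w0 : V) (p : V * V) : bool :=
  ((p.1 == v0) || (p.2 == v0)) && ~~ is_edge_arc v0 w0 p.

Lemma card_edge_arcs v0 w0 : adj v0 w0 -> v0 != w0 ->
  #|[pred p : V * V | adj p.1 p.2 && is_edge_arc v0 w0 p]| = 2.
Proof.
move=> a nvw; rewrite -[RHS](_ : #|pred2 (v0, w0) (w0, v0)| = 2); last first.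
  by rewrite card2 xpair_eqE (negbTE nvw).
apply: eq_card => -[u v]; rewrite !inE /is_edge_arc /=.
case: eqP => [[-> ->]|_] /=; first by rewrite a.
by case: eqP => [[-> ->]|_]; rewrite ?andbF // -adj_sym a.
Qed.

(* At most [2 (deg v0 - 1)] side arcs: each one is determined by its other
   endpoint, a neighbour of [v0] distinct from [w0], and its orientation. *)
Lemma card_side_arcs v0 w0 k : adj v0 w0 -> #|[pred v | adj v0 v]| <= k ->
  #|[pred p : V * V | adj p.1 p.2 && is_side_arc v0 w0 p]| <= 2 * k.-1.
Proof.
move=> a deg; set Nw := [set v | adj v0 v && (v != w0)].
have cNw : #|Nw| = #|[pred v | adj v0 v]|.-1.
  rewrite (cardD1 w0 [pred v | adj v0 v]) inE a /= cardsE.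
  by apply: eq_card => v; rewrite !inE andbC.
apply: leq_trans (_ : #|setX [set v0] Nw :|: setX Nw [set v0]| <= _).
  apply: subset_leq_card; apply/subsetP => -[u v]; rewrite !inE /is_side_arc /is_edge_arc /=.
  rewrite !xpair_eqE => /andP[auv /andP[/orP[/eqP eu|/eqP ev] nedge]].
    by move: nedge; rewrite eu eqxx /= negb_or => /andP[nv _]; rewrite -eu auv nv.
  move: nedge; rewrite ev eqxx andbT negb_or => /andP[_ nu].
  by rewrite -ev -adj_sym auv nu orbT.
rewrite cardsU !cardsX cards1 mul1n muln1 cNw; lia.
Qed.

Lemma narcs_gt0 u v : adj u v -> 0 < narcs adj.
Proof. by move=> a; apply/card_gt0P; exists (u, v); rewrite inE. Qed.

Lemma narcs_le_3nedges : 2 <= narcs adj -> narcs adj <= 3 * nedges adj.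
Proof.
rewrite /nedges => arcs2; have := odd_double_half (narcs adj).
by case: (odd _) => /=; lia.
Qed.

Hypothesis adj_irr : irreflexive adj.

Lemma dist_narcs_ge2 x y n : is_dist adj x y n -> 0 < n -> 2 <= narcs adj.
Proof.
case=> -[[|w p] [pxp [_ <-]]] _ //= _; move: pxp => /andP[a _].
have nxw : x != w by apply: contraTneq a => ->; rewrite adj_irr.
rewrite -(_ : #|pred2 (x, w) (w, x)| = 2); last by rewrite card2 xpair_eqE (negbTE nxw).
apply: subset_leq_card; apply/subsetP => -[u v]; rewrite !inE /=.
by case/orP => /eqP [-> ->] //; rewrite -adj_sym.
Qed.

Lemma dist_narcs_le x y n : is_dist adj x y n ->
  (INR (narcs adj) * INR n <= 3 * INR (nedges adj) * INR n)%R.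
Proof.
move=> dxy; case: (posnP n) => [->|n0]; first by rewrite !Rmult_0_r; lra.
apply: Rmult_le_compat_r; first exact: pos_INR.
have := le_INR _ _ (leP (narcs_le_3nedges (dist_narcs_ge2 dxy n0))).
by rewrite mult_INR /=; lra.
Qed.

End ArcCounting.

Section Drift.
Variables (V : finType) (d : nat) (adj : rel V) (dl : V -> nat) (F : nat -> R).
Hypotheses (d_pos : 0 < d) (adj_sym : symmetric adj) (adj_irr : irreflexive adj).
Hypothesis deg_le : forall u, #|[pred v | adj u v]| <= d * d.
Hypothesis dl_adj : forall u v, adj u v -> dl u <= (dl v).+1.
Hypothesis F_mono : forall m n, m <= n -> (F m <= F n)%R.

Let G (s : {ffun V -> bool}) : R := F (front dl s).

Let D := INR (d * d).
Let q := (D + 1)%R.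

Lemma G_le (s : {ffun V -> bool}) w m : s w -> dl w <= m -> (G s <= F m)%R.
Proof. by move=> sw wm; apply/F_mono/(leq_trans (front_le dl sw)). Qed.

Lemma edge_mean_le_const (s : {ffun V -> bool}) (u v : V) (c : R) :
  (forall a b, G (relabel s u v a b) <= c)%R -> (edge_mean d G s u v <= c)%R.
Proof.
move=> Gc; apply: (Rle_trans _ (edge_mean d (fun=> c) s u v)).
  apply: sumR_le => -[a b] _; apply: Rmult_le_compat_l; [exact: pair_update_ge0 | exact: Gc].
by rewrite /edge_mean -big_distrl sum_bool2 /= pair_update_sum1 // Rmult_1_l; lra.
Qed.

(* Resampling an edge whose endpoint [u] is labeled "N": the outcome "II"
   has probability zero, so only the three other outcomes need a bound. *)
Lemma edge_mean_from_N (s : {ffun V -> bool}) (u v : V) (c : bool -> bool -> R) : s u ->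
  (forall a b, a || b -> G (relabel s u v a b) <= c a b)%R ->
  (edge_mean d G s u v <= ((D - 1) * c true true + c true false + c false true) / q)%R.
Proof.
move=> su Gc; have D1 : (1 <= D)%R by apply: INR_dd_ge1.
have pGc a b : a || b -> (pair_update d (s u) (s v) a b * G (relabel s u v a b) <=
                          pair_update d (s u) (s v) a b * c a b)%R.
  by move=> ab; apply: Rmult_le_compat_l; [apply: pair_update_ge0 | apply: Gc].
rewrite /edge_mean sum_bool2 /=.
have := pGc _ _ (orTb true); have := pGc _ _ (orTb false); have := pGc false true erefl.
rewrite su !pair_update_N /= -/D -/q Rmult_0_l => *.
apply: (Rle_trans _ ((D - 1) / q * c true true + 1 / q * c true false +
                     (1 / q * c false true + 0)))%R; first lra.
by rewrite /q; apply: Req_le; field; lra.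
Qed.

Variables (s : {ffun V -> bool}) (v0 w0 : V).
Hypotheses (s_v0 : s v0) (v0w0 : adj v0 w0).

(* An arc away from [v0] keeps [v0] labeled "N", so the front stays <= dl v0. *)
Lemma arc_far_mean u v : u != v0 -> v != v0 ->
  (edge_mean d G s u v <= F (dl v0))%R.
Proof.
move=> uv0 vv0; apply: edge_mean_le_const => a b.
apply: (G_le (w := v0)) => //.
by rewrite relabelE eq_sym (negbTE uv0) eq_sym (negbTE vv0).
Qed.

(* A side arc at [v0] can only push the front to [dl v0 + 1], with
   probability [1/q]. *)
Lemma arc_side_mean v : adj v0 v ->
  (edge_mean d G s v0 v <= F (dl v0) + (F (dl v0).+1 - F (dl v0)) / q)%R.
Proof.
move=> a; have D1 : (1 <= D)%R by apply: INR_dd_ge1.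
apply: Rle_trans (edge_mean_from_N (c := fun a _ => if a then F (dl v0) else F (dl v0).+1) s_v0 _) _.
  have nv : v0 != v by apply: contraTneq a => <-; rewrite adj_irr.
  move=> [] b /= ab.
    by apply: (G_le (w := v0)); rewrite ?relabelE ?eqxx.
  apply: (G_le (w := v)); first by rewrite relabelE eq_sym (negbTE nv) eqxx.
  by rewrite -adj_sym in a; exact: dl_adj a.
by rewrite /q; apply: Req_le; field; lra.
Qed.

(* The edge [{v0, w0}] moves the front to at most [dl w0] with probability
   [D/q] (at least one of its endpoints ends up "N", and [w0] with
   probability [D/q]). *)
Lemma arc_edge_mean :
  (edge_mean d G s v0 w0 <= F (dl v0) - D * (F (dl v0) - F (dl w0)) / q)%R.
Proof.
have D1 : (1 <= D)%R by apply: INR_dd_ge1.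
have nvw : v0 != w0 by apply: contraTneq v0w0 => <-; rewrite adj_irr.
apply: Rle_trans (edge_mean_from_N (c := fun a b => if b then F (dl w0) else F (dl v0)) s_v0 _) _.
  move=> a [] /= ab.
    by apply: (G_le (w := w0)); rewrite ?relabelE ?(negbTE nvw) // eq_sym (negbTE nvw) eqxx.
  by case: a ab => // _; apply: (G_le (w := v0)); rewrite ?relabelE ?eqxx.
by rewrite /q; apply: Req_le; field; lra.
Qed.

Let side_gain := ((F (dl v0).+1 - F (dl v0)) / q)%R.
Let edge_loss := (D * (F (dl v0) - F (dl w0)) / q)%R.

Lemma arc_mean u v : adj u v ->
  (edge_mean d G s u v <= F (dl v0) + (if is_side_arc v0 w0 (u, v) then side_gain else 0)
                          - (if is_edge_arc v0 w0 (u, v) then edge_loss else 0))%R.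
Proof.
move=> a; rewrite /is_side_arc /is_edge_arc !xpair_eqE /=.
have nvw : (v0 == w0) = false by apply: negbTE; apply: contraTneq v0w0 => <-; rewrite adj_irr.
case: (eqVneq u v0) a => [->|uv0] a /=.
  case: (eqVneq v w0) a => [->|vw0] a /=; rewrite ?andbF ?nvw /=.
    by have := arc_edge_mean; rewrite /edge_loss; lra.
  by have := arc_side_mean a; rewrite /side_gain; lra.
case: (eqVneq v v0) a => [->|vv0] a /=; last first.
  by rewrite !andbF /=; have := arc_far_mean uv0 vv0; lra.
rewrite andbT edge_mean_sym; last by apply: contraTneq a => ->; rewrite adj_irr.
case: (eqVneq u w0) a => [->|uw0] a /=.
  by have := arc_edge_mean; rewrite /edge_loss; lra.
by rewrite -adj_sym in a; have := arc_side_mean a; rewrite /side_gain; lra.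
Qed.

(* The drift inequality: averaging [arc_mean] over the [N] arcs, of which
   two are edge arcs and at most [2 (D - 1)] are side arcs. *)
Lemma front_drift :
  (Rsum (fun s' => M0_kernel d adj s s' * G s') <=
   F (dl v0) + 2 / (INR (narcs adj) * q) *
     ((D - 1) * (F (dl v0).+1 - F (dl v0)) - D * (F (dl v0) - F (dl w0))))%R.
Proof.
have D1 : (1 <= D)%R by apply: INR_dd_ge1.
have nvw : v0 != w0 by apply: contraTneq v0w0 => <-; rewrite adj_irr.
have N0 : (0 < INR (narcs adj))%R by apply/lt_0_INR/ltP/narcs_gt0/v0w0.
set N := INR (narcs adj) in N0 *.
rewrite M0_kernel_mean //.
apply: (Rle_trans _ (\big[Rplus/0%R]_(p : V * V)
   (((if adj p.1 p.2 then F (dl v0) else 0)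
     + (if adj p.1 p.2 && is_side_arc v0 w0 p then side_gain else 0)
     - (if adj p.1 p.2 && is_edge_arc v0 w0 p then edge_loss else 0)) / N))%R).
  apply: sumR_le => -[u v] _ /=; case: ifP => a /=; last by apply: Req_le; field; lra.
  by apply: Rmult_le_compat_r; [apply/Rlt_le/Rinv_0_lt_compat | apply: arc_mean].
rewrite /Rdiv -big_distrl sumR_sub big_split !sumR_const.
rewrite (card_edge_arcs adj_sym v0w0 nvw) -/(narcs adj) -/N.
set sides := #|_|.
have gain0 : (0 <= side_gain)%R.
  by apply: Rmult_le_pos; [have := F_mono (leqnSn (dl v0)); lra | apply/Rlt_le/Rinv_0_lt_compat; rewrite /q; lra].
have: (INR sides <= 2 * (D - 1))%R.
  have sides_le : sides <= 2 * (d * d).-1 := card_side_arcs adj_sym v0w0 (deg_le v0).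
  apply: Rle_trans (le_INR _ _ (leP sides_le)) _.
  have pred_D : INR (d * d).-1 = (D - 1)%R.
    by rewrite /D -[in RHS](prednK (_ : 0 < d * d)) ?muln_gt0 ?d_pos // S_INR; ring.
  by rewrite mult_INR pred_D /=; lra.
move=> /(Rmult_le_compat_r _ _ _ gain0) sides_gain.
apply: (Rle_trans _ ((N * F (dl v0) + 2 * (D - 1) * side_gain - 2 * edge_loss) * / N)).
  by apply: Rmult_le_compat_r; [apply/Rlt_le/Rinv_0_lt_compat | rewrite /=; lra].
by rewrite /side_gain /edge_loss /q; apply: Req_le; field; lra.
Qed.

End Drift.

Section PotentialBounds.
Variables (V : finType) (d : nat) (adj : rel V) (y : V).
Hypothesis d_pos : 0 < d.

Let K := M0_kernel d adj.
Let avoid_y := avoid d adj y.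

Lemma avoid_N t (s : {ffun V -> bool}) : s y -> avoid_y t s = 0%R.
Proof. by rewrite /avoid_y; case: t => [|t] /= ->. Qed.

Lemma avoid_sum_le (Phi : {ffun V -> bool} -> R) :
  (forall s, live s -> 0 <= Phi s)%R ->
  (forall s, live s -> s y = false -> 1 + Rsum (fun s' => K s s' * Phi s') <= Phi s)%R ->
  forall T s, live s -> (Rsum_lt T (fun t => avoid_y t s) <= Phi s)%R.
Proof.
move=> Phi0 drop; elim=> [|T IH] s ls; rewrite Rsum_ltE.
  by rewrite big_geq //; apply: Phi0.
rewrite big_nat_recl //; case sy: (s y).
  by rewrite big1 ?avoid_N // => [|t _]; [rewrite Rplus_0_r; apply: Phi0 | apply: avoid_N].
have -> : \big[Rplus/0%R]_(0 <= t < T) avoid_y t.+1 s =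
          Rsum (fun s' => K s s' * Rsum_lt T (fun t => avoid_y t s'))%R.
  rewrite RsumE; under [RHS]eq_bigr do rewrite Rsum_ltE big_distrr.
  rewrite exchange_big /=; apply: eq_bigr => t _.
  by rewrite /avoid_y /= sy RsumE.
rewrite /avoid_y /= sy -/avoid_y.
apply: Rle_trans (drop _ ls sy); apply: Rplus_le_compat_l.
exact: M0_mean_le_live (fun s' ls' => IH s' ls').
Qed.

Lemma avoid_le (Phi : {ffun V -> bool} -> R) (rho : R) : (0 <= rho)%R ->
  (forall s, live s -> 0 <= Phi s)%R ->
  (forall s, live s -> s y = false -> 1 <= Phi s)%R ->
  (forall s, live s -> s y = false -> Rsum (fun s' => K s s' * Phi s') <= rho * Phi s)%R ->
  forall T s, live s -> (avoid_y T s <= rho ^ T * Phi s)%R.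
Proof.
move=> rho0 Phi0 Phi1 contract; elim=> [|T IH] s ls.
  by rewrite /avoid_y /= Rmult_1_l; case sy: (s y); [apply: Phi0 | apply: Phi1].
case sy: (s y); first by rewrite avoid_N //; apply/Rmult_le_pos/Phi0/ls/pow_le.
rewrite /avoid_y /= sy -/avoid_y.
apply: (Rle_trans _ (Rsum (fun s' => K s s' * (rho ^ T * Phi s'))%R)).
  exact: M0_mean_le_live (fun s' ls' => IH s' ls').
have -> : Rsum (fun s' => K s s' * (rho ^ T * Phi s'))%R =
          (rho ^ T * Rsum (fun s' => K s s' * Phi s'))%R.
  by rewrite !RsumE big_distrr; apply: eq_bigr => s' _ /=; ring.
apply: (Rle_trans _ (rho ^ T * (rho * Phi s))); last by apply: Req_le; simpl; ring.
by apply: Rmult_le_compat_l; [apply: pow_le | apply: contract].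
Qed.

End PotentialBounds.

Section FrontPotentials.
Variables (V : finType) (d : nat) (adj : rel V) (y : V).
Hypotheses (d_pos : 0 < d) (adj_sym : symmetric adj) (adj_irr : irreflexive adj).
Hypothesis adj_connected : forall u v, connect adj u v.
Hypothesis deg_le : forall u, #|[pred v | adj u v]| <= d * d.

Let dl := dist_to y adj_connected.
Let D := INR (d * d).
Let N := INR (narcs adj).

Lemma front_arc (s : {ffun V -> bool}) : live s -> s y = false ->
  exists v0 w0, [/\ s v0, front dl s = dl v0, adj v0 w0 & (dl w0).+1 = dl v0].
Proof.
case/existsP=> w sw sy; have [v0 sv0 fv0] := front_attained dl sw.
have pos : 0 < dl v0 by rewrite lt0n; apply/eqP => /dist_to0 ev0; rewrite -ev0 sv0 in sy.
have [w0 a dw0] := dist_to_step pos.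
by exists v0, w0.
Qed.

Lemma linear_potential_drop (s : {ffun V -> bool}) : live s -> s y = false ->
  (1 + Rsum (fun s' => M0_kernel d adj s s' * (N * (D + 1) / 2 * INR (front dl s'))) <=
   N * (D + 1) / 2 * INR (front dl s))%R.
Proof.
move=> ls sy; have [v0 [w0 [sv0 -> a dw0]]] := front_arc ls sy.
have D1 : (1 <= D)%R by apply: INR_dd_ge1.
have N0 : (0 < N)%R by apply/lt_0_INR/ltP/narcs_gt0/a.
have F_mono m n : m <= n -> (N * (D + 1) / 2 * INR m <= N * (D + 1) / 2 * INR n)%R.
  move=> /leP/le_INR mn; apply: Rmult_le_compat_l => //.
  by apply: Rmult_le_pos; [apply: Rmult_le_pos|]; lra.
have := front_drift d_pos adj_sym adj_irr deg_le (dist_to_adj y adj_connected) F_mono sv0 a.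
rewrite -/dl -/D -/N -dw0 !S_INR => drift.
apply: Rle_trans (Rplus_le_compat_l 1 _ _ drift) _; apply: Req_le; field; lra.
Qed.

Lemma exp_potential_contract (s : {ffun V -> bool}) : live s -> s y = false ->
  (Rsum (fun s' => M0_kernel d adj s s' * (1 + / D) ^ front dl s') <=
   (1 - 2 / (N * (D + 1) ^ 2 * D)) * (1 + / D) ^ front dl s)%R.
Proof.
move=> ls sy; have [v0 [w0 [sv0 -> a dw0]]] := front_arc ls sy.
have D1 : (1 <= D)%R by apply: INR_dd_ge1.
have N0 : (0 < N)%R by apply/lt_0_INR/ltP/narcs_gt0/a.
have F_mono m n : m <= n -> ((1 + / D) ^ m <= (1 + / D) ^ n)%R.
  move=> /leP mn; apply: Rle_pow mn; have := Rinv_0_lt_compat D; lra.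
have := front_drift d_pos adj_sym adj_irr deg_le (dist_to_adj y adj_connected) F_mono sv0 a.
rewrite -/dl -/D -/N -dw0 /= => drift.
have P0 : (0 < (1 + / D) ^ dl w0)%R by apply: pow_lt; have := Rinv_0_lt_compat D; lra.
apply: Rle_trans drift _; apply: Req_le; field; lra.
Qed.

Lemma init_state_live (x : V) : live (init_state x).
Proof. by apply/existsP; exists x; rewrite ffunE eqxx. Qed.

Lemma front_init_le (x : V) : front dl (init_state x) <= dl x.
Proof. by apply: front_le; rewrite ffunE eqxx. Qed.

Lemma expected_hitting_le (x : V) T :
  (Rsum_lt T (fun t => avoid d adj y t (init_state x)) <= N * (D + 1) / 2 * INR (dl x))%R.
Proof.
have D1 : (1 <= D)%R by apply: INR_dd_ge1.
have alpha0 : (0 <= N * (D + 1) / 2)%R.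
  by apply: Rmult_le_pos; [apply: Rmult_le_pos; [apply: pos_INR|]|]; lra.
apply: Rle_trans (avoid_sum_le d_pos _ linear_potential_drop T (init_state_live x)) _.
  by move=> s _; apply: Rmult_le_pos => //; apply: pos_INR.
by apply/Rmult_le_compat_l/le_INR/leP/front_init_le.
Qed.

(* The contraction factor of the exponential potential is nonnegative (it is
   at least one half since [N (D + 1)^2 D >= 4]). *)
Lemma contraction_ge0 : 0 < narcs adj -> (0 <= 1 - 2 / (N * (D + 1) ^ 2 * D))%R.
Proof.
move=> arcs0; have D1 : (1 <= D)%R by apply: INR_dd_ge1.
have N1 : (1 <= N)%R by apply: (le_INR 1); apply/leP.
have X4 : (4 <= (D + 1) ^ 2)%R by rewrite /=; nra.
have NX : (4 <= N * (D + 1) ^ 2)%R by rewrite -(Rmult_1_l 4); apply: Rmult_le_compat; lra.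
have big : (4 <= N * (D + 1) ^ 2 * D)%R by rewrite -(Rmult_1_r 4); apply: Rmult_le_compat; lra.
have : (/ (N * (D + 1) ^ 2 * D) <= / 4)%R by apply: Rinv_le_contravar; lra.
by rewrite /Rdiv; lra.
Qed.

Lemma hitting_tail_le (x : V) T : 0 < narcs adj ->
  (avoid d adj y T (init_state x) <=
   (1 - 2 / (N * (D + 1) ^ 2 * D)) ^ T * (1 + / D) ^ dl x)%R.
Proof.
move=> arcs0; have D1 : (1 <= D)%R by apply: INR_dd_ge1.
have lam1 : (1 <= 1 + / D)%R by have := Rinv_0_lt_compat D; lra.
have rho0 := contraction_ge0 arcs0.
apply: Rle_trans (avoid_le d_pos rho0 _ _ exp_potential_contract T (init_state_live x)) _.
- by move=> s _; apply: pow_le; lra.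
- by move=> s _ _; apply: pow_R1_Rle.
apply/Rmult_le_compat_l/Rle_pow/leP/front_init_le => //; exact: pow_le.
Qed.

Variables (x : V) (n : nat).
Hypothesis x_dist : is_dist adj x y n.

Lemma expected_hitting_bound T :
  (Rsum_lt T (fun t => avoid d adj y t (init_state x)) <=
   3 * (D + 1) / 2 * INR (nedges adj) * INR n)%R.
Proof.
have D1 : (1 <= D)%R by apply: INR_dd_ge1.
apply: Rle_trans (expected_hitting_le x T) _.
have alpha0 : (0 <= N * (D + 1) / 2)%R.
  by apply: Rmult_le_pos; [apply: Rmult_le_pos; [apply: pos_INR|]|]; lra.
apply: Rle_trans (Rmult_le_compat_l _ _ _ alpha0 (le_INR _ _ (leP (dist_to_le adj_connected x_dist))))  _.
have := Rmult_le_compat_r ((D + 1) / 2) _ _ ltac:(rewrite /Rdiv; lra) (dist_narcs_le adj_sym adj_irr x_dist).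
by rewrite -/N; lra.
Qed.

Lemma hitting_tail_bound : exists T : nat,
  (INR T <= 3 * ((D + 1) ^ 2 * D) * INR (nedges adj) * INR n)%R /\
  (1 - exp (- (1 * INR n)) <= 1 - avoid d adj y T (init_state x))%R.
Proof.
have D1 : (1 <= D)%R by apply: INR_dd_ge1.
case: (posnP n) => [n0|n_pos].
  exists 0; rewrite n0 /= !Rmult_0_r Ropp_0 exp_0; split; first lra.
  by case: (init_state x y); lra.
have arcs2 := dist_narcs_ge2 adj_sym adj_irr x_dist n_pos.
set M := ((d * d + 1) * (d * d + 1) * (d * d))%N.
have M_eq : INR M = ((D + 1) ^ 2 * D)%R by rewrite /M /D !(mult_INR, plus_INR) /=; ring.
exists (M * narcs adj * n); rewrite (mult_INR _ n) (mult_INR M) M_eq -/N; split.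
  have M0 : (0 <= (D + 1) ^ 2 * D)%R by apply: Rmult_le_pos; [apply: pow_le|]; lra.
  apply: (Rle_trans _ ((D + 1) ^ 2 * D * (N * INR n))); first by apply: Req_le; ring.
  apply: Rle_trans (Rmult_le_compat_l _ _ _ M0 (dist_narcs_le adj_sym adj_irr x_dist)) _.
  by apply: Req_le; ring.
have N2 : (2 <= N)%R by apply: (le_INR 2); apply/leP.
have lam0 : (0 < / D)%R by apply: Rinv_0_lt_compat; lra.
have rho_T : ((1 - 2 / (N * (D + 1) ^ 2 * D)) ^ (M * narcs adj * n) <= exp (- (2 * INR n)))%R.
  rewrite /Rminus; apply: Rle_trans (pow_le_exp _ _) _; first exact: contraction_ge0 (ltnW arcs2).
  rewrite (mult_INR _ n) (mult_INR M) M_eq -/N; apply: exp_le; apply: Req_le; field; lra.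
have lam_n : ((1 + / D) ^ dl x <= exp (INR n))%R.
  apply: Rle_trans (Rle_pow _ _ _ _ (leP (dist_to_le adj_connected x_dist))) _; first lra.
  apply: Rle_trans (pow_le_exp _ _) _; first lra.
  apply/exp_le; rewrite -[X in (_ <= X)%R]Rmult_1_r; apply: Rmult_le_compat_l; first exact: pos_INR.
  by rewrite -Rinv_1; apply: Rinv_le_contravar; lra.
have tail := hitting_tail_le x (M * narcs adj * n) (ltnW arcs2).
have lam_pos : (0 <= (1 + / D) ^ dl x)%R by apply: pow_le; lra.
have := Rmult_le_compat _ _ _ _ (pow_le _ _ (contraction_ge0 (ltnW arcs2))) lam_pos rho_T lam_n.
rewrite -exp_plus (_ : (- (2 * INR n) + INR n = - (1 * INR n))%R); last by ring.
lra.
Qed.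

End FrontPotentials.

Theorem lemma1 : forall d : nat, (2 <= d)%N ->
  (exists K : R, (0 < K)%R /\
     forall (V : finType) (adj : rel V) (x y : V) (n : nat),
       symmetric adj -> irreflexive adj ->
       (forall u v, connect adj u v) ->
       (forall u, #|[pred v | adj u v]| <= d * d)%N ->
       is_dist adj x y n ->
       forall T : nat,
         (Rsum_lt T (fun t => avoid d adj y t (init_state x))
            <= K * INR (nedges adj) * INR n)%R)
  /\
  (exists C c : R, (0 < C)%R /\ (0 < c)%R /\
     forall (V : finType) (adj : rel V) (x y : V) (n : nat),
       symmetric adj -> irreflexive adj ->
       (forall u v, connect adj u v) ->
       (forall u, #|[pred v | adj u v]| <= d * d)%N ->
       is_dist adj x y n ->
       exists T : nat,
         (INR T <= C * INR (nedges adj) * INR n)%R /\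
         (1 - exp (- (c * INR n)) <= 1 - avoid d adj y T (init_state x))%R).
Proof.
move=> d d2; have d_pos : 0 < d by apply: leq_trans d2.
have D1 : (1 <= INR (d * d))%R by apply: INR_dd_ge1.
split.
  exists (3 * (INR (d * d) + 1) / 2)%R; split; first lra.
  move=> V adj x y n sym irr conn deg dxy T.
  exact: expected_hitting_bound.
exists (3 * ((INR (d * d) + 1) ^ 2 * INR (d * d)))%R, 1%R; split.
  by apply: Rmult_lt_0_compat; [lra | apply: Rmult_lt_0_compat; [apply: pow_lt|]; lra].
split; first lra.
move=> V adj x y n sym irr conn deg dxy.
exact: hitting_tail_bound.
Qed.
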